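(* For all integers $d\ge 2$ and $n\ge 2$, every Latin hypercuboid in $\mathrm{LHC}(d,n,n-1)$ is completable.
   Context: $[n]=\{1,\dots,n\}$. For integers $d\ge2$ and $1\le k\le n$, $\mathrm{LHC}(d,n,k)$ denotes the set of $d$-dimensional arrays of dimensions $n\times\cdots\times n\times k$ (the last coordinate ranging over $[k]$, the others over $[n]$) with entries from $[n]$ such that each symbol occurs at most once in each axis-parallel line (a set of cells obtained by fixing all coordinates but one). A hypercuboid $H\in\mathrm{LHC}(d,n,k)$ is completable if it is contained in (i.e. equals the restriction to the first $k$ values of the last coordinate of) some array in $\mathrm{LHC}(d,n,n)$ (a Latin hypercube). *)

From mathcomp Require Import all_boot.
Set Implicit Arguments. Unset Strict Implicit. Unset Printing Implicit Defensive.

(* A d-dimensional array of dimensions n x ... x n x k (d-1 coordinates in [n],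
   last coordinate in [k]) with entries in [n].  [n] is modelled by 'I_n
   (values 0..n-1), cells by pairs (x, z) with x : {ffun 'I_(d.-1) -> 'I_n}
   the first d-1 coordinates and z : 'I_k the last coordinate. *)
Definition cell (d n k : nat) : finType := ({ffun 'I_d.-1 -> 'I_n} * 'I_k)%type.

Definition array (d n k : nat) : finType := {ffun cell d n k -> 'I_n}.

Definition same_line (d n k : nat) (c c' : cell d n k) : Prop :=
  (c.2 = c'.2 /\ exists i : 'I_d.-1, forall j : 'I_d.-1, j != i -> c.1 j = c'.1 j)
  \/ c.1 = c'.1.

Definition is_latin (d n k : nat) (H : array d n k) : Prop :=
  forall c c' : cell d n k, same_line c c' -> H c = H c' -> c = c'.

Definition LHC (d n k : nat) (H : array d n k) : Prop := is_latin H.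

Definition completable (d n k : nat) (H : array d n k) : Prop :=
  exists L : array d n n, LHC L /\
    forall (x : {ffun 'I_d.-1 -> 'I_n}) (z : 'I_k) (hz : (z < n)%N),
      L (x, Ordinal hz) = H (x, z).

From mathcomp Require Import all_boot.

Set Implicit Arguments.
Unset Strict Implicit.
Unset Printing Implicit Defensive.

(* A Latin hypercuboid with n - 1 layers misses exactly one symbol on each
   vertical line, and filling the last layer with these missing symbols gives a
   Latin hypercube.  The only thing to check is that two cells of the new layer
   on a common line get different symbols.  Along such a line, each symbol s
   occurs once in each of the n - 1 layers, at pairwise different positions
   (s occurs at most once on each vertical line), so s is missing above exactly
   one of the n positions of the line. *)

Lemma exists_notin_codom (aT rT : finType) (f : aT -> rT) :
  #|aT| < #|rT| -> exists y, y \notin codom f.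
Proof.
move=> ltTT'; apply/existsP; rewrite -negb_forall; apply/negP => /forallP allf.
have: #|rT| <= #|codom f|.
  by apply: subset_leq_card; apply/subsetP => y _; exact: allf.
by rewrite leqNgt (leq_ltn_trans (card_size _)) // size_codom.
Qed.

Lemma notin_codom_eq (aT rT : finType) (f : aT -> rT) (y y' : rT) :
  injective f -> #|rT| = #|aT|.+1 -> y \notin codom f -> y' \notin codom f ->
  y = y'.
Proof.
move=> injf cardT yf y'f.
have card_notin : #|[predC codom f]| <= 1.
  by rewrite -(leq_add2l #|codom f|) cardC card_codom // cardT addn1.
by apply: (card_le1_eqP card_notin).
Qed.

Definition set_coord (T : Type) (I : finType) (x : {ffun I -> T}) (i : I) (t : T) :
  {ffun I -> T} := [ffun j => if j == i then t else x j].

Lemma set_coord_same (T : Type) (I : finType) (x x' : {ffun I -> T}) (i : I) :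
  (forall j, j != i -> x j = x' j) -> set_coord x i (x' i) = x'.
Proof. by move=> xx'; apply/ffunP => j; rewrite ffunE; case: eqP => [->|/eqP/xx']. Qed.

Lemma set_coord_id (T : Type) (I : finType) (x : {ffun I -> T}) (i : I) :
  set_coord x i (x i) = x.
Proof. exact: set_coord_same. Qed.

Section Completion.

Variables (d m : nat) (H : array d m.+2 m.+1).
Hypothesis latinH : LHC H.

Local Notation point := {ffun 'I_d.-1 -> 'I_m.+2}.

Lemma latin_column_inj (x : point) : injective (fun z => H (x, z)).
Proof. by move=> z z' /(@latinH (x, z) (x, z') (or_intror erefl)) [->]. Qed.

Lemma latin_line_inj (x : point) i z : injective (fun t => H (set_coord x i t, z)).
Proof.
move=> t t' Ht.
have line : same_line (set_coord x i t, z) (set_coord x i t', z).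
  by left; split=> //; exists i => j ji; rewrite !ffunE (negbTE ji).
case: (latinH line Ht) => e.
by have := congr1 (fun y : point => y i) e; rewrite !ffunE eqxx.
Qed.

Lemma missing_exists (x : point) : exists s, s \notin codom (fun z => H (x, z)).
Proof. by apply: exists_notin_codom; rewrite !card_ord. Qed.

Definition missing (x : point) : 'I_m.+2 := xchoose (missing_exists x).

Lemma missingP x z : H (x, z) != missing x.
Proof.
apply: contraNneq (xchooseP (missing_exists x)) => e.
by rewrite -/(missing x) -e; apply: (codom_f (fun z => H (x, z))).
Qed.

Definition line_pos (x : point) i s z : 'I_m.+2 := invF (@latin_line_inj x i z) s.

Lemma line_posK x i s z : H (set_coord x i (line_pos x i s z), z) = s.
Proof. exact: (f_invF (@latin_line_inj x i z)). Qed.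

Lemma line_pos_inj x i s : injective (line_pos x i s).
Proof.
move=> z z' e; apply: (@latin_column_inj (set_coord x i (line_pos x i s z))).
by rewrite /= {2}e !line_posK.
Qed.

Lemma missing_line_inj (x x' : point) i :
  (forall j, j != i -> x j = x' j) -> missing x = missing x' -> x = x'.
Proof.
move=> xx' e; set s := missing x.
have absent t : (forall z, H (set_coord x i t, z) != s) ->
    t \notin codom (line_pos x i s).
  by move=> tabs; apply/codomP => -[z tz]; have := tabs z; rewrite tz line_posK eqxx.
have x'_eq : set_coord x i (x' i) = x' by exact: set_coord_same.
suff eq_i : x i = x' i by rewrite -x'_eq -eq_i set_coord_id.
apply: (notin_codom_eq (@line_pos_inj x i s)); rewrite ?card_ord //; apply: absent => z.
  by rewrite set_coord_id missingP.
by rewrite x'_eq /s e missingP.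
Qed.

Definition completion : array d m.+2 m.+2 :=
  [ffun c => if unlift ord_max c.2 is Some z then H (c.1, z) else missing c.1].

Lemma completion_lift x z : completion (x, lift ord_max z) = H (x, z).
Proof. by rewrite ffunE /= liftK. Qed.

Lemma completion_max x : completion (x, ord_max) = missing x.
Proof. by rewrite ffunE /= unlift_none. Qed.

Lemma completion_column_inj (x : point) : injective (fun z => completion (x, z)).
Proof.
move=> z z' /=.
case: (unliftP ord_max z) => [z0 ->|->]; case: (unliftP ord_max z') => [z0' ->|->];
  rewrite ?completion_lift ?completion_max //.
- by move/latin_column_inj => ->.
- by move=> e; have := missingP x z0; rewrite e eqxx.
- by move=> e; have := missingP x z0'; rewrite e eqxx.
Qed.

Lemma completion_latin : LHC completion.
Proof.
move=> [x z] [x' z'] /= [[/= <- [i xx']] | /= <-]; last by move/completion_column_inj ->.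
case: (unliftP ord_max z) => [z0 ->|->]; rewrite ?completion_lift ?completion_max.
- have line : same_line (x, z0) (x', z0) by left; split=> //; exists i.
  by move/(latinH line) => -[->].
- by move/(missing_line_inj xx') ->.
Qed.

End Completion.

Theorem mainTheorem4 (d n : nat) (hd : (2 <= d)%N) (hn : (2 <= n)%N)
  (H : array d n n.-1) : LHC H -> completable H.
Proof.
case: n hn H => [|[|m]] // _ H latinH.
exists (completion H); split; first exact: completion_latin.
move=> x z hz.
have -> : Ordinal hz = lift ord_max z by apply: val_inj; exact: (esym (lift_max z)).
exact: completion_lift.
Qed.
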